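(* Let $(S,\sqcup)$ be a left regular band and let $I$ be a $\lesssim$-ideal of $S$ that is relatively maximal with respect to not containing $d\in S$. If $a\in S$ and $a\notin I$, then there exists $i\in I$ such that $d\lesssim a\sqcup i$.
   Context: A left regular band is a set $S$ with a binary operation $\sqcup$ satisfying $a\sqcup(b\sqcup c)=(a\sqcup b)\sqcup c$, $a\sqcup a=a$, $a\sqcup b=(a\sqcup b)\sqcup a$. Write $a\lesssim b$ iff $b\sqcup a=b$ (a quasiorder). A $\lesssim$-ideal is a non-empty subset $I\subseteq S$ that is a down-set under $\lesssim$ and satisfies $i\sqcup j\in I$ for all $i,j\in I$. For $d\in S$, a $\lesssim$-ideal $I$ is relatively maximal with respect to not containing $d$ if $d\notin I$ and no $\lesssim$-ideal properly containing $I$ omits $d$. *)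

Definition is_LRB {S : Type} (op : S -> S -> S) : Prop :=
  (forall a b c, op a (op b c) = op (op a b) c) /\
  (forall a, op a a = a) /\
  (forall a b, op a b = op (op a b) a).

Definition lrb_le {S : Type} (op : S -> S -> S) (a b : S) : Prop := op b a = b.

Definition is_ideal {S : Type} (op : S -> S -> S) (I : S -> Prop) : Prop :=
  (exists x, I x) /\
  (forall a b, lrb_le op a b -> I b -> I a) /\
  (forall i j, I i -> I j -> I (op i j)).

Definition rel_max_not_containing {S : Type} (op : S -> S -> S)
    (I : S -> Prop) (d : S) : Prop :=
  is_ideal op I /\ ~ I d /\
  forall J : S -> Prop, is_ideal op J -> (forall x, I x -> J x) ->
    (exists x, J x /\ ~ I x) -> J d.


(* The elements below some a ⊔ i with i ∈ I form a ≲-ideal: it is closed under ⊔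
   because a ⊔ (i ⊔ j) lies above both a ⊔ i and a ⊔ j, and ⊔ of two elements
   below c stays below c.  It contains I and, when a ∉ I, also a, so relative
   maximality forces d into it. *)

Section LeftRegularBand.

Variables (S : Type) (op : S -> S -> S).
Hypothesis hLRB : is_LRB op.

Notation "a ≲ b" := (lrb_le op a b) (at level 70).

Lemma opA a b c : op a (op b c) = op (op a b) c.
Proof. apply hLRB. Qed.

Lemma opxx a : op a a = a.
Proof. apply hLRB. Qed.

Lemma op_regular a b : op a b = op (op a b) a.
Proof. apply hLRB. Qed.

Lemma lrb_le_opl a b : a ≲ op a b.
Proof. unfold lrb_le. symmetry. apply op_regular. Qed.

Lemma lrb_le_opr a b : b ≲ op a b.
Proof. unfold lrb_le. now rewrite <- opA, opxx. Qed.

Lemma lrb_le_trans a b c : a ≲ b -> b ≲ c -> a ≲ c.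
Proof.
  unfold lrb_le. intros hab hbc.
  transitivity (op (op c b) a); [now rewrite hbc |].
  now rewrite <- opA, hab, hbc.
Qed.

Lemma lrb_le_op u v c : u ≲ c -> v ≲ c -> op u v ≲ c.
Proof. unfold lrb_le. intros hu hv. now rewrite opA, hu, hv. Qed.

Lemma lrb_le_op_insert a i j : op a j ≲ op (op a i) j.
Proof.
  apply lrb_le_op; [| apply lrb_le_opr].
  apply (lrb_le_trans _ (op a i)); apply lrb_le_opl.
Qed.

Definition ideal_adjoin (I : S -> Prop) (a : S) : S -> Prop :=
  fun x => exists i, I i /\ x ≲ op a i.

Variables (I : S -> Prop) (a : S).

Lemma is_ideal_adjoin : is_ideal op I -> is_ideal op (ideal_adjoin I a).
Proof.
  intros [[x0 hx0] [_ hIop]]. split; [| split].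
  - exists a, x0. split; [exact hx0 | apply lrb_le_opl].
  - intros u v huv [i [hi hv]]. exists i. split; [exact hi |].
    exact (lrb_le_trans _ _ _ huv hv).
  - intros u v [i [hi hu]] [j [hj hv]]. exists (op i j). split; [auto |].
    rewrite opA. apply lrb_le_op.
    + exact (lrb_le_trans _ _ _ hu (lrb_le_opl _ _)).
    + exact (lrb_le_trans _ _ _ hv (lrb_le_op_insert _ _ _)).
Qed.

Lemma ideal_adjoin_sub x : I x -> ideal_adjoin I a x.
Proof. intros hx. exists x. split; [exact hx | apply lrb_le_opr]. Qed.

Lemma ideal_adjoin_mem : is_ideal op I -> ideal_adjoin I a a.
Proof. intros [[x0 hx0] _]. exists x0. split; [exact hx0 | apply lrb_le_opl]. Qed.

End LeftRegularBand.

Theorem lemma2p4 (S : Type) (op : S -> S -> S) (I : S -> Prop) (d a : S) :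
  is_LRB op -> rel_max_not_containing op I d -> ~ I a ->
  exists i, I i /\ lrb_le op d (op a i).
Proof.
  intros hLRB [hI [_ hmax]] ha.
  apply (hmax (ideal_adjoin S op I a)).
  - exact (is_ideal_adjoin S op hLRB I a hI).
  - exact (ideal_adjoin_sub S op hLRB I a).
  - exists a. split; [exact (ideal_adjoin_mem S op hLRB I a hI) | exact ha].
Qed.
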